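(* Let $\mu>-1$, $\beta>0$, $N\ge1$, $Z\in\{G,R\}$, $\omega=x^\mu$. Let $\phi_1,\phi_2$ be real continuous functions on $[0,\infty)$ in $L^2_{x^\mu}(\mathbb R_+)$, $\phi=\phi_1\phi_2$, $\psi_i=\widehat I_{Z,N}^{(\mu,\beta)}\phi_i$ ($i=1,2$). Then $$\Bigl|\int_0^\infty\phi(x)x^\mu dx-\sum_{j=0}^N\phi\bigl(\xi^{(\mu,\beta)}_{Z,N,j}\bigr)\widehat\omega^{(\mu,\beta)}_{Z,N,j}\Bigr| \le\bigl(\|\phi_1\|_\omega+\|\phi_2\|_\omega+\|\psi_1\|_\omega+\|\psi_2\|_\omega\bigr)\bigl(\|\phi_1-\psi_1\|_\omega+\|\phi_2-\psi_2\|_\omega\bigr).$$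
   Context: $\|f\|_\omega=(\int_0^\infty|f|^2\omega)^{1/2}$; $P_K$ is the space of polynomials of degree at most $K$. $\mathscr L_n^{(\alpha)}$ is the generalized Laguerre polynomial (orthogonal on $(0,\infty)$ w.r.t. $x^\alpha e^{-x}$), $\widehat{\mathscr L}_n^{(\alpha)}(x)=e^{-x/2}\mathscr L_n^{(\alpha)}(x)$, and $\widehat P_N^{\beta,L}=\{e^{-\beta x/2}p:p\in P_N\}$. Laguerre–Gauss nodes $\xi^{(\mu,\beta)}_{G,N,j}$ ($0\le j\le N$) are the zeros of $\widehat{\mathscr L}^{(\mu)}_{N+1}(\beta x)$; Laguerre–Gauss–Radau nodes $\xi^{(\mu,\beta)}_{R,N,j}$ are the zeros of $x\,\widehat{\mathscr L}^{(\mu+1)}_{N}(\beta x)$. $\widehat I_{Z,N}^{(\mu,\beta)}v$ is the unique element of $\widehat P_N^{\beta,L}$ agreeing with $v$ at these nodes. The weights $\widehat\omega^{(\mu,\beta)}_{Z,N,j}$ are the numbers such that $\int_0^\infty\phi(x)x^\mu dx=\sum_{j}\phi(\xi^{(\mu,\beta)}_{Z,N,j})\widehat\omega^{(\mu,\beta)}_{Z,N,j}$ for all $\phi\in\{e^{-\beta x}p:p\in P_{2N+\lambda_Z}\}$, with $\lambda_G=1$, $\lambda_R=0$ (equivalently $\widehat\omega_{Z,N,j}=e^{\beta\xi_{Z,N,j}}\omega_{Z,N,j}$ where $\omega_{Z,N,j}$ are the Gauss, resp. Gauss–Radau, weights for the weight $x^\mu e^{-\beta x}$). *)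

From HB Require Import structures.
From mathcomp Require Import all_boot all_order all_algebra.
From mathcomp Require Import all_classical all_reals all_analysis.
Unset Printing Implicit Defensive.
Import Order.TTheory GRing.Theory Num.Theory.
Local Open Scope ring_scope.
Local Open Scope classical_set_scope.

(* Generalized Laguerre polynomials L_n^(alpha), via the standard three-term
   recurrence  L_0 = 1, L_1 = 1 + alpha - x,
   (n+2) L_{n+2} = (2n+3+alpha - x) L_{n+1} - (n+1+alpha) L_n.
   lag_pair alpha n = (L_n, L_{n+1}). *)
Fixpoint lag_pair {R : realType} (alpha : R) (n : nat) : {poly R} * {poly R} :=
  match n with
  | 0 => (1, (1 + alpha)%:P - 'X)
  | n'.+1 =>
      let (a, b) := lag_pair alpha n' in
      (b, (n'.+2%:R)^-1 *: ((((2 * n'%:R + 3 + alpha)%:P - 'X) * b)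
                            - (n'%:R + 1 + alpha) *: a))
  end.

Definition laguerre {R : realType} (n : nat) (alpha : R) : {poly R} :=
  (lag_pair alpha n).1.

Definition laguerre_hat {R : realType} (n : nat) (alpha : R) (x : R) : R :=
  expR (- x / 2) * (laguerre n alpha).[x].

Inductive quad_kind := Gauss | Radau.

Definition lambda_Z (Z : quad_kind) : nat :=
  match Z with Gauss => 1%N | Radau => 0%N end.

Definition node_fun {R : realType} (Z : quad_kind) (mu beta : R) (N : nat)
    (x : R) : R :=
  match Z with
  | Gauss => laguerre_hat N.+1 mu (beta * x)
  | Radau => x * laguerre_hat N (mu + 1) (beta * x)
  end.

Definition is_nodes {R : realType} (Z : quad_kind) (mu beta : R) (N : nat)
    (xi : 'I_N.+1 -> R) : Prop :=
  injective xi /\ (forall x : R, node_fun Z mu beta N x = 0 <-> exists j, xi j = x).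

Definition is_weights {R : realType} (Z : quad_kind) (mu beta : R) (N : nat)
    (xi w : 'I_N.+1 -> R) : Prop :=
  forall p : {poly R}, (size p <= (2 * N + lambda_Z Z).+1)%N ->
    Rintegral lebesgue_measure `]0, +oo[
      (fun x => expR (- beta * x) * p.[x] * x `^ mu)
    = \sum_(j < N.+1) expR (- beta * xi j) * p.[xi j] * w j.

Definition hat_fun {R : realType} (beta : R) (q : {poly R}) (x : R) : R :=
  expR (- beta * x / 2) * q.[x].

(* q represents \hat I_{Z,N}^{(mu,beta)} phi: q in P_N and e^{-beta x/2} q agrees
   with phi at the nodes (this determines q uniquely). *)
Definition is_interp {R : realType} (beta : R) (N : nat) (xi : 'I_N.+1 -> R)
    (phi : R -> R) (q : {poly R}) : Prop :=
  (size q <= N.+1)%N /\ forall j, hat_fun beta q (xi j) = phi (xi j).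

Definition wnorm {R : realType} (mu : R) (f : R -> R) : R :=
  Num.sqrt (Rintegral lebesgue_measure `]0, +oo[ (fun x => f x ^+ 2 * x `^ mu)).

Definition in_L2w {R : realType} (mu : R) (f : R -> R) : Prop :=
  measurable_fun (`]0, +oo[ : set R) f /\
  lebesgue_measure.-integrable `]0, +oo[ (fun x => (f x ^+ 2 * x `^ mu)%:E).

From HB Require Import structures.
From mathcomp Require Import all_boot all_order all_algebra.
From mathcomp Require Import all_classical all_reals all_analysis.
From mathcomp Require Import ring lra zify measurable_realfun.
Import Order.TTheory GRing.Theory Num.Theory.
Import numFieldNormedType.Exports.
Local Open Scope classical_set_scope.
Local Open Scope ring_scope.

Set Implicit Arguments.
Unset Strict Implicit.
Unset Printing Implicit Defensive.

(* Exactness of the rule on e^{-beta x} P_{2N+lambda_Z} applies to psi1 psi2 =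
   e^{-beta x} q1 q2, since deg (q1 q2) <= 2N, and psi_i = phi_i at the nodes;
   hence the quadrature sum equals the integral of psi1 psi2 x^mu.  The error is
   then the integral of (phi1 - psi1) phi2 + psi1 (phi2 - psi2) against x^mu,
   which Cauchy-Schwarz in L^2_{x^mu} bounds by
   |phi1 - psi1| |phi2| + |psi1| |phi2 - psi2|.  The only analytic input is
   psi_i in L^2_{x^mu}: for mu > -1, x^mu is integrable at 0 and any polynomial
   is dominated by e^{beta x / 2} at infinity. *)

Lemma discriminant_le0 (R : realFieldType) (a b c : R) : 0 <= a ->
  (forall t, 0 <= a * t ^+ 2 + b * t + c) -> b ^+ 2 <= 4 * a * c.
Proof.
move=> a0 ge0; rewrite -subr_le0.
have := @deg_le2_poly_delta_ge0 R (Poly [:: c; b; a]) (size_Poly _).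
rewrite !coef_Poly; apply => // t; rewrite horner_Poly /=.
by have := ge0 t; congr (_ <= _); ring.
Qed.

Section integrable_lemmas.
Context d (T : measurableType d) (R : realType) (mu : {measure set T -> \bar R}).

Section fixed_domain.
Variables (D : set T) (mD : measurable D).

Lemma integrableD_EFin (f g : T -> R) :
  mu.-integrable D (EFin \o f) -> mu.-integrable D (EFin \o g) ->
  mu.-integrable D (EFin \o (fun x => f x + g x)).
Proof. by move=> intf intg; exact: eq_integrable (integrableD mD intf intg). Qed.

Lemma integrableZl_EFin (k : R) (f : T -> R) :
  mu.-integrable D (EFin \o f) -> mu.-integrable D (EFin \o (fun x => k * f x)).
Proof. by move=> intf; exact: eq_integrable (integrableZl mD k intf). Qed.

End fixed_domain.

Lemma integrable_setU (A B : set T) (f : T -> \bar R) :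
  measurable A -> measurable B -> [disjoint A & B] ->
  mu.-integrable A f -> mu.-integrable B f -> mu.-integrable (A `|` B) f.
Proof.
move=> mA mB AB /integrableP[mfA intA] /integrableP[mfB intB].
have mfAB : measurable_fun (A `|` B) f by apply/measurable_funU.
apply/integrableP; split => //.
rewrite ge0_integral_setU //; first exact: lte_add_pinfty.
exact: measurableT_comp.
Qed.

End integrable_lemmas.

Section weighted_L2.
Context d (T : measurableType d) (R : realType) (mu : {measure set T -> \bar R}).
Variables (D : set T) (wt : T -> R).
Hypotheses (mD : measurable D) (mwt : measurable_fun D wt).
Hypothesis wt_ge0 : forall x, D x -> 0 <= wt x.

(* For Lebesgue measure on ]0, +oo[ and weight x^mu these are in_L2w and wnorm. *)
Definition wL2 (f : T -> R) : Prop :=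
  measurable_fun D f /\ mu.-integrable D (fun x => (f x ^+ 2 * wt x)%:E).

Definition wL2norm (f : T -> R) : R :=
  Num.sqrt (Rintegral mu D (fun x => f x ^+ 2 * wt x)).

Lemma wL2_integrableM (f g : T -> R) : wL2 f -> wL2 g ->
  mu.-integrable D (EFin \o (fun x => f x * g x * wt x)).
Proof.
move=> [mf intf] [mg intg].
apply: (le_integrable mD _ _ (integrableD_EFin mD intf intg)).
- by apply/measurable_EFinP; do 2 apply: measurable_funM => //.
move=> x Dx /=; rewrite lee_fin -mulrDl !normrM (ger0_norm (wt_ge0 Dx)).
rewrite ler_wpM2r ?wt_ge0 // (ger0_norm (addr_ge0 (sqr_ge0 _) (sqr_ge0 _))).
rewrite -[f x ^+ 2]real_normK ?num_real // -[g x ^+ 2]real_normK ?num_real //.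
by have := normr_ge0 (f x); have := normr_ge0 (g x); nra.
Qed.

Lemma wL2B (f g : T -> R) : wL2 f -> wL2 g -> wL2 (fun x => f x - g x).
Proof.
move=> Lf Lg; have intfg := wL2_integrableM Lf Lg.
case: Lf Lg => [mf intf] [mg intg]; split; first exact: measurable_funB.
have := integrableD_EFin mD (integrableD_EFin mD intf
  (integrableZl_EFin mD (-2) intfg)) intg.
by apply: eq_integrable => // x _ /=; congr EFin; ring.
Qed.

Lemma wL2_cauchy_schwarz (f g : T -> R) : wL2 f -> wL2 g ->
  `|Rintegral mu D (fun x => f x * g x * wt x)| <= wL2norm f * wL2norm g.
Proof.
move=> Lf Lg; have intfg := wL2_integrableM Lf Lg.
case: Lf Lg => [_ intf] [_ intg]; rewrite /wL2norm.
set A := Rintegral _ _ (fun x => f x ^+ 2 * wt x).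
set B := Rintegral _ _ (fun x => f x * g x * wt x).
set C := Rintegral _ _ (fun x => g x ^+ 2 * wt x).
have A_ge0 : 0 <= A by apply: Rintegral_ge0 => x Dx; rewrite mulr_ge0 ?sqr_ge0 ?wt_ge0.
have C_ge0 : 0 <= C by apply: Rintegral_ge0 => x Dx; rewrite mulr_ge0 ?sqr_ge0 ?wt_ge0.
have quad_ge0 t : 0 <= A * t ^+ 2 + 2 * B * t + C.
  have -> : A * t ^+ 2 + 2 * B * t + C = Rintegral mu D
      (fun x => t ^+ 2 * (f x ^+ 2 * wt x) + 2 * t * (f x * g x * wt x)
                + g x ^+ 2 * wt x).
    rewrite !RintegralD ?RintegralZl //; first by rewrite /A /B /C; ring.
    - exact: integrableZl_EFin.
    - exact: integrableZl_EFin.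
    - by apply: integrableD_EFin => //; exact: integrableZl_EFin.
  apply: Rintegral_ge0 => x Dx.
  have -> : t ^+ 2 * (f x ^+ 2 * wt x) + 2 * t * (f x * g x * wt x)
      + g x ^+ 2 * wt x = (t * f x + g x) ^+ 2 * wt x by ring.
  by rewrite mulr_ge0 ?sqr_ge0 ?wt_ge0.
have BAC : B ^+ 2 <= A * C.
  by have := discriminant_le0 A_ge0 quad_ge0; nra.
by rewrite -sqrtrM // -sqrtr_sqr ler_sqrt // mulr_ge0.
Qed.

Lemma wL2_mul_sub_mul (f1 f2 g1 g2 : T -> R) :
  wL2 f1 -> wL2 f2 -> wL2 g1 -> wL2 g2 ->
  `|Rintegral mu D (fun x => f1 x * f2 x * wt x)
    - Rintegral mu D (fun x => g1 x * g2 x * wt x)|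
  <= wL2norm (fun x => f1 x - g1 x) * wL2norm f2
     + wL2norm g1 * wL2norm (fun x => f2 x - g2 x).
Proof.
move=> L1 L2 M1 M2.
have D1 := wL2B L1 M1; have D2 := wL2B L2 M2.
rewrite -RintegralB ?wL2_integrableM //.
have -> : Rintegral mu D (fun x => f1 x * f2 x * wt x - g1 x * g2 x * wt x) =
    Rintegral mu D (fun x => (f1 x - g1 x) * f2 x * wt x)
    + Rintegral mu D (fun x => g1 x * (f2 x - g2 x) * wt x).
  rewrite -RintegralD ?wL2_integrableM //.
  by apply: eq_Rintegral => x _; ring.
by apply: le_trans (ler_normD _ _) _; apply: lerD; exact: wL2_cauchy_schwarz.
Qed.

End weighted_L2.

Lemma norm_horner_le (R : realDomainType) (p : {poly R}) (x : R) : 0 <= x ->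
  `|p.[x]| <= (\sum_(i < size p) `|p`_i|) * (1 + x ^+ size p).
Proof.
move=> x_ge0; rewrite horner_coef mulr_suml.
apply: le_trans (ler_norm_sum _ _ _) _.
apply: ler_sum => i _; rewrite normrM normrX (ger0_norm x_ge0).
apply: ler_wpM2l => //.
have [x_le1|x_gt1] := leP x 1.
  by apply: le_trans (exprn_ile1 i x_ge0 x_le1) _; rewrite lerDl exprn_ge0.
have x_le : x ^+ i <= x ^+ size p by apply: ler_weXn2l; [exact: ltW | exact: ltnW].
by apply: le_trans x_le _; rewrite lerDr.
Qed.

Section exponential_moments.
Context {R : realType}.
Notation mu := (@lebesgue_measure R).

Lemma exprn_le_expR (c : R) (n : nat) : 0 < c ->
  exists C, forall x, 0 <= x -> x ^+ n <= C * expR (c * x).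
Proof.
move=> c_gt0; case: n => [|n].
  by exists 1 => x x_ge0; rewrite expr0 mul1r -expR0 ler_expR mulr_ge0 // ltW.
exists (n.+1`!%:R / c ^+ n.+1) => x x_ge0.
have cx_ge0 : 0 <= c * x by rewrite mulr_ge0 // ltW.
have fact_gt0 : 0 < n.+1`!%:R :> R by rewrite ltr0n fact_gt0.
have cn_gt0 : 0 < c ^+ n.+1 by rewrite exprn_gt0.
rewrite mulrC -ler_pdivrMr ?divr_gt0 //.
have -> : x ^+ n.+1 / (n.+1`!%:R / c ^+ n.+1) = (c * x) ^+ n.+1 / n.+1`!%:R.
  by rewrite exprMn; field; rewrite !gt_eqF.
by apply: le_trans (expR_ge1Dxn n cx_ge0); rewrite lerDr.
Qed.

Lemma horner_le_expR (c : R) (p : {poly R}) : 0 < c ->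
  exists K, forall x, 0 <= x -> `|p.[x]| <= K * expR (c * x).
Proof.
move=> c_gt0; have [C xC] := exprn_le_expR (size p) c_gt0.
set S := \sum_(i < size p) `|p`_i|.
have S_ge0 : 0 <= S by apply: sumr_ge0.
exists (S * (1 + C)) => x x_ge0.
have e_ge1 : 1 <= expR (c * x) by rewrite -expR0 ler_expR mulr_ge0 // ltW.
apply: le_trans (norm_horner_le p x_ge0) _.
by rewrite -mulrA ler_wpM2l // mulrDl mul1r lerD // xC.
Qed.

Lemma powR_le_expR (c m : R) : 0 < c ->
  exists C, forall x, 1 <= x -> x `^ m <= C * expR (c * x).
Proof.
move=> c_gt0; have [C xC] := exprn_le_expR (Num.truncn `|m|).+1 c_gt0.
exists C => x x_ge1; have x_ge0 := le_trans ler01 x_ge1.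
apply: le_trans (xC x x_ge0); rewrite -powR_mulrn // ler_powR //.
by apply: le_trans (real_ler_norm (num_real m)) _; exact/ltW/truncnS_gt.
Qed.

Lemma integral_powR_itvc1 (m a : R) : -1 < m -> 0 < a -> a < 1 ->
  (\int[mu]_(x in `[a, 1%R]) (x `^ m)%:E = ((1 - a `^ (m + 1)) / (m + 1))%:E)%E.
Proof.
move=> m_gtN1 a_gt0 a_lt1; have m1_gt0 : 0 < m + 1 by lra.
have dF : forall x, 0 < x -> derivable (fun x => (m + 1)^-1 * x `^ (m + 1)) x 1.
  move=> x x_gt0; apply: derivableM => //.
  by apply: derivable_powR; rewrite in_itv /= andbT.
have cF : forall x, 0 < x -> {for x, continuous (fun x => (m + 1)^-1 * x `^ (m + 1))}.
  by move=> x x_gt0; apply/differentiable_continuous; rewrite -derivable1_diffP; exact: dF.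
rewrite (@continuous_FTC2 _ _ (fun x => (m + 1)^-1 * x `^ (m + 1))) //.
- by rewrite -EFinB powR1; congr EFin; rewrite /=; field; lra.
- apply: derivable_within_continuous => x; rewrite in_itv /= => /andP[ax _].
  by apply: derivable_powR; rewrite in_itv /= andbT (lt_le_trans a_gt0 ax).
- split.
  + by move=> x; rewrite in_itv /= => /andP[ax _]; apply: dF; exact: lt_trans ax.
  + by apply: cvg_at_right_filter; apply: cF.
  + by apply: cvg_at_left_filter; apply: cF; lra.
- move=> x; rewrite in_itv /= => /andP[ax _].
  have x_gt0 : 0 < x by exact: lt_trans ax.
  rewrite derive1Ml; last by apply: derivable_powR; rewrite in_itv /= andbT.
  rewrite powR_derive1 ?in_itv /= ?andbT // mulrA mulVf ?gt_eqF // mul1r.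
  by congr powR; ring.
Qed.

Lemma integrable_powR_itv01 (m : R) : -1 < m ->
  mu.-integrable `]0, 1%R] (fun x => (x `^ m)%:E).
Proof.
move=> m_gtN1; have m1_gt0 : 0 < m + 1 by lra.
have mpow : measurable_fun (`]0, 1%R] : set R) (fun x => (x `^ m)%:E).
  by apply/measurable_EFinP; apply: measurable_funTS; exact: measurable_powR.
apply/integrableP; split => //.
under eq_integral => x _ do rewrite /= ger0_norm ?powR_ge0 //.
(* x^m may be unbounded at 0: exhaust ]0, 1] by the [1/(n+2), 1] and use
   monotone convergence with the antiderivative bound 1/(m+1). *)
pose F n := [set` `[n.+2%:R^-1, 1%R]] : set R.
have F_cover : `]0, 1%R]%classic = \bigcup_n F n.
  apply/seteqP; split => x /=.
    rewrite in_itv /= => /andP[x_gt0 x_le1].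
    exists (Num.truncn x^-1) => //=; rewrite /F /= in_itv /= x_le1 andbT.
    rewrite -[x in _ <= x]invrK lef_pV2 ?posrE ?invr_gt0 ?ltr0n //.
    by apply: le_trans (ltW (truncnS_gt _)) _; rewrite ler_nat.
  move=> [n _]; rewrite /F /= !in_itv /= => /andP[nx ->]; rewrite andbT.
  by apply: lt_le_trans nx; rewrite invr_gt0.
have F_nd : {homo F : n k / (n <= k)%N >-> (n <= k)%O}.
  apply/nondecreasing_seqP => n; rewrite subsetEset => x.
  rewrite /F /= !in_itv /= => /andP[nx ->]; rewrite andbT; apply: le_trans nx.
  by rewrite lef_pV2 ?posrE ?ltr0n // ler_nat.
have F_cvg : (\int[mu]_(x in F n) (x `^ m)%:E)%E @[n --> \oo] -->
    (\int[mu]_(x in \bigcup_n F n) (x `^ m)%:E)%E.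
  apply: ge0_nondecreasing_set_cvg_integral => //.
  - by move=> n; exact: measurable_itv.
  - by move=> n; apply/measurable_EFinP; apply: measurable_funTS; exact: measurable_powR.
  - by move=> n x _; rewrite lee_fin powR_ge0.
rewrite F_cover -(cvg_lim _ F_cvg) //.
apply: (@le_lt_trans _ _ (m + 1)^-1%:E); last exact: ltry.
apply: lime_le; first by apply/cvg_ex; eexists; exact: F_cvg.
apply: nearW => n; rewrite /F integral_powR_itvc1 //; last first.
  by rewrite invf_lt1 ?ltr0n // ltr1n.
by rewrite lee_fin ler_pdivrMr // mulVf ?gt_eqF // gerBl powR_ge0.
Qed.

Lemma integrable_expRN (c : R) : 0 < c ->
  mu.-integrable `]0, +oo[ (fun x => (expR (- c * x))%:E).
Proof.
move=> c_gt0.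
have : mu.-integrable `]0, +oo[ (fun x => c^-1%:E * (EFin \o exponential_pdf c) x)%E.
  apply: integrableZl => //; apply: integrableS (integrable_exponential_pdf c_gt0) => //.
apply: eq_integrable => // x; rewrite inE /= in_itv /= andbT => x_gt0.
by rewrite exponential_pdfE ?ltW // -EFinM mulrA mulVf ?gt_eqF // mul1r.
Qed.

Lemma measurable_expRN_mul (c : R) (D : set R) (g : R -> R) :
  measurable_fun D g -> measurable_fun D (fun x => expR (- c * x) * g x).
Proof.
move=> mg; apply: measurable_funM => //; apply: measurable_funTS.
apply: continuous_measurable_fun => x; apply: continuous_comp; last exact: continuous_expR.
by apply: continuousM => //; exact: cst_continuous.
Qed.

Lemma integrable_expRN_powR (c m : R) : 0 < c -> -1 < m ->
  mu.-integrable `]0, +oo[ (fun x => (expR (- c * x) * x `^ m)%:E).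
Proof.
move=> c_gt0 m_gtN1.
have mf (D : set R) : measurable_fun D (fun x => (expR (- c * x) * x `^ m)%:E).
  apply/measurable_EFinP; apply: measurable_expRN_mul.
  by apply: measurable_funTS; exact: measurable_powR.
have -> : `]0, +oo[%classic = `]0, 1%R] `|` `]1%R, +oo[ :> set R.
  apply/seteqP; split => x /=; rewrite !in_itv /= ?andbT.
    by move=> x_gt0; have [x_le1|x_gt1] := leP x 1; [left; rewrite x_gt0 | right].
  by case=> [/andP[] // | ]; apply: lt_trans.
apply: integrable_setU => //.
- apply/disj_setPS => x [] /=; rewrite !in_itv /= => /andP[_ x_le1] /andP[x_gt1 _].
  by move: (lt_le_trans x_gt1 x_le1); rewrite ltxx.
- apply: (le_integrable _ _ _ (integrable_powR_itv01 m_gtN1)) => //; first exact: mf.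
  move=> x; rewrite /= in_itv /= => /andP[x_gt0 _].
  rewrite lee_fin normrM (ger0_norm (expR_ge0 _)) ler_piMl // expR_le1.
  by rewrite mulNr oppr_le0 mulr_ge0 // ltW.
- have c2_gt0 : 0 < c / 2 by lra.
  have [C xC] := powR_le_expR m c2_gt0.
  have : mu.-integrable `]1%R, +oo[ (EFin \o (fun x => C * expR (- (c / 2) * x))).
    apply: integrableZl_EFin => //; apply: integrableS (integrable_expRN c2_gt0) => //.
    by move=> x /=; rewrite !in_itv /= !andbT; exact: lt_trans.
  apply: le_integrable => //; first exact: mf.
  move=> x; rewrite /= in_itv /= andbT => x_gt1.
  rewrite lee_fin ger0_norm ?mulr_ge0 ?expR_ge0 ?powR_ge0 //.
  apply: le_trans (ler_norm _).
  apply: le_trans (ler_wpM2l (expR_ge0 _) (xC x (ltW x_gt1))) _.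
  rewrite mulrCA -expRD.
  by have -> : - c * x + c / 2 * x = - (c / 2) * x by field.
Qed.

Lemma integrable_expRN_horner_powR (b m : R) (p : {poly R}) : 0 < b -> -1 < m ->
  mu.-integrable `]0, +oo[ (fun x => (expR (- b * x) * p.[x] * x `^ m)%:E).
Proof.
move=> b_gt0 m_gtN1; have b2_gt0 : 0 < b / 2 by lra.
have [K pK] := horner_le_expR p b2_gt0.
have : mu.-integrable `]0, +oo[
    (EFin \o (fun x => K * (expR (- (b / 2) * x) * x `^ m))).
  by apply: integrableZl_EFin => //; exact: integrable_expRN_powR.
apply: le_integrable => //.
  apply/measurable_EFinP; apply: measurable_funM.
    apply: measurable_expRN_mul; apply: measurable_funTS.
    by apply: continuous_measurable_fun; exact: continuous_horner.
  by apply: measurable_funTS; exact: measurable_powR.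
move=> x; rewrite /= in_itv /= andbT => x_gt0; rewrite lee_fin.
apply: le_trans (ler_norm _).
rewrite !normrM (ger0_norm (expR_ge0 _)) (ger0_norm (powR_ge0 _ _)).
rewrite mulrA ler_wpM2r ?powR_ge0 //.
apply: le_trans (ler_wpM2l (expR_ge0 _) (pK x (ltW x_gt0))) _.
rewrite mulrCA -expRD.
by have -> : - b * x + b / 2 * x = - (b / 2) * x by field.
Qed.

End exponential_moments.

Lemma size_mul_le_double (R : idomainType) (p q : {poly R}) (n : nat) :
  (size p <= n.+1)%N -> (size q <= n.+1)%N -> (size (p * q)%R <= (2 * n).+1)%N.
Proof. by move=> sp sq; apply: leq_trans (size_mul_leq _ _) _; lia. Qed.

Lemma hat_funM (R : realType) (b : R) (q1 q2 : {poly R}) (x : R) :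
  hat_fun b q1 x * hat_fun b q2 x = expR (- b * x) * (q1 * q2).[x].
Proof.
rewrite /hat_fun hornerM.
have -> : expR (- b * x) = expR (- b * x / 2) * expR (- b * x / 2).
  by rewrite -expRD; congr expR; field.
by ring.
Qed.

Lemma in_L2w_hat_fun (R : realType) (b m : R) (q : {poly R}) : 0 < b -> -1 < m ->
  in_L2w m (hat_fun b q).
Proof.
move=> b_gt0 m_gtN1; split.
  have -> : hat_fun b q = (fun x => expR (- (b / 2) * x) * q.[x]).
    by apply/funext => x; rewrite /hat_fun; congr (expR _ * _); field.
  apply: measurable_expRN_mul; apply: measurable_funTS.
  by apply: continuous_measurable_fun; exact: continuous_horner.
apply: eq_integrable (integrable_expRN_horner_powR (q * q) b_gt0 m_gtN1) => //.
by move=> x _ /=; rewrite expr2 hat_funM.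
Qed.

Lemma quadrature_interpM (R : realType) (mu beta : R) (N : nat) (Z : quad_kind)
    (xi w : 'I_N.+1 -> R) (phi1 phi2 : R -> R) (q1 q2 : {poly R}) :
  is_weights Z mu beta N xi w ->
  is_interp beta N xi phi1 q1 -> is_interp beta N xi phi2 q2 ->
  \sum_(j < N.+1) phi1 (xi j) * phi2 (xi j) * w j
  = Rintegral lebesgue_measure `]0, +oo[
      (fun x => hat_fun beta q1 x * hat_fun beta q2 x * x `^ mu).
Proof.
move=> exact_rule [size_q1 interp1] [size_q2 interp2].
under eq_bigr => j _ do rewrite -interp1 -interp2 hat_funM.
rewrite -exact_rule; last first.
  by apply: leq_trans (size_mul_le_double size_q1 size_q2) _; rewrite ltnS leq_addr.
by apply: eq_Rintegral => x _; rewrite hat_funM.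
Qed.

Lemma ler_cross_sum (R : realFieldType) (a1 a2 b1 b2 d1 d2 : R) :
  0 <= a1 -> 0 <= a2 -> 0 <= b1 -> 0 <= b2 -> 0 <= d1 -> 0 <= d2 ->
  d1 * a2 + b1 * d2 <= (a1 + a2 + b1 + b2) * (d1 + d2).
Proof. by move=> *; nra. Qed.

Theorem mainTheorem12 (R : realType) (mu beta : R) (N : nat) (Z : quad_kind)
    (xi w : 'I_N.+1 -> R) (phi1 phi2 : R -> R) (q1 q2 : {poly R}) :
  -1 < mu -> 0 < beta -> (1 <= N)%N ->
  is_nodes Z mu beta N xi ->
  is_weights Z mu beta N xi w ->
  {within `[0, +oo[, continuous phi1} ->
  {within `[0, +oo[, continuous phi2} ->
  in_L2w mu phi1 -> in_L2w mu phi2 ->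
  is_interp beta N xi phi1 q1 -> is_interp beta N xi phi2 q2 ->
  let phi := fun x => phi1 x * phi2 x in
  let psi1 := hat_fun beta q1 in
  let psi2 := hat_fun beta q2 in
  `| Rintegral lebesgue_measure `]0, +oo[ (fun x => phi x * x `^ mu)
     - \sum_(j < N.+1) phi (xi j) * w j |
  <= (wnorm mu phi1 + wnorm mu phi2 + wnorm mu psi1 + wnorm mu psi2)
     * (wnorm mu (fun x => phi1 x - psi1 x) + wnorm mu (fun x => phi2 x - psi2 x)).
Proof.
move=> mu_gtN1 beta_gt0 _ _ exact_rule _ _ L1 L2 I1 I2; cbv zeta.
rewrite (quadrature_interpM exact_rule I1 I2).
have mwt : measurable_fun (`]0, +oo[ : set R) (fun x => x `^ mu).
  by apply: measurable_funTS; exact: measurable_powR.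
have wt_ge0 (x : R) : (`]0, +oo[%classic : set R) x -> 0 <= x `^ mu.
  by move=> _; exact: powR_ge0.
have M1 := in_L2w_hat_fun q1 beta_gt0 mu_gtN1.
have M2 := in_L2w_hat_fun q2 beta_gt0 mu_gtN1.
refine (le_trans (wL2_mul_sub_mul (mu := lebesgue_measure)
  (measurable_itv _) mwt wt_ge0 L1 L2 M1 M2) _).
by apply: ler_cross_sum; exact: sqrtr_ge0.
Qed.
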